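(* Let $(G,C,s,t)$ be an input to $\mathrm{DACC}$ with $n=|V(G)|$ and $m=|E(G)|$, and let $\mu(C)$ denote the number of maximal independent sets of $C$. The algorithm that enumerates the maximal independent sets $I$ of $C$ using an output-sensitive enumeration procedure with delay $M(m)$ (where $M(k)=\mathcal{O}(k^{2.372})$ is the time to multiply two $k\times k$ matrices), and for each $I$ runs breadth-first search to test whether the digraph $(V(G),I)$ contains a directed $s$–$t$ path (returning True as soon as one is found, and False otherwise), runs in time \[\mathcal{O}(n+m)\cdot M(m)\cdot \mu(C)\;\le\;\mathcal{O}(n^{6.75})\cdot\mu(C)\;\le\;\mathcal{O}(1.45^{n^2}).\]
   Context: Let $\Gamma=(V,E)$ be a directed acyclic graph. A constraint graph for $\Gamma$ is a simple undirected graph $C=(E,E')$ whose vertex set is the edge set of $\Gamma$; an edge $e_1e_2\in E'$ represents the constraint that the edges $e_1$ and $e_2$ cannot both be present. A subgraph $\Gamma'\subseteq\Gamma$ is valid if its edge set is an independent set in $C$. The problem $\mathrm{DACC}$ takes as input a directed acyclic graph $\Gamma$, a constraint graph $C$ for $\Gamma$, and vertices $s,t$, and asks whether some valid subgraph of $\Gamma$ contains a directed path from $s$ to $t$. An output-sensitive enumeration algorithm with delay $d$ for a set $S$ lists all elements of $S$ in total time at most $d|S|$. *)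

From Stdlib Require Import Reals.
From mathcomp Require Import all_boot.
Set Implicit Arguments. Unset Strict Implicit. Unset Printing Implicit Defensive.

Section DACC.
Variable V : finType.

Definition edges (A : rel V) : {set V * V} := [set p | A p.1 p.2].

Definition acyclic (A : rel V) : Prop := forall x y, A x y -> ~~ connect A y x.

(* C : rel (V*V) is a constraint graph for Gamma: a simple undirected graph
   (symmetric, irreflexive) whose vertex set is E (only edges of Gamma are related). *)
Definition constraint_graph (A : rel V) (C : rel (V * V)) : Prop :=
  [/\ forall e f, C e f = C f e,
      forall e, ~~ C e e &
      forall e f, C e f -> (e \in edges A) && (f \in edges A)].

Definition independent (A : rel V) (C : rel (V * V)) (I : {set V * V}) : bool :=
  (I \subset edges A) && [forall e in I, forall f in I, ~~ C e f].

Definition maximal_independent (A : rel V) (C : rel (V * V)) (I : {set V * V}) : bool :=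
  independent A C I &&
  [forall e in edges A :\: I, ~~ independent A C (e |: I)].

Definition mu (A : rel V) (C : rel (V * V)) : nat :=
  #|[set I : {set V * V} | maximal_independent A C I]|.

Definition reach (F : {set V * V}) (s t : V) : bool :=
  connect (fun x y => (x, y) \in F) s t.

Definition DACC (A : rel V) (C : rel (V * V)) (s t : V) : Prop :=
  exists F : {set V * V}, independent A C F /\ reach F s t.

(* Cost model of one run of an output-sensitive enumerator of the maximal
   independent sets of C with delay d: L lists each maximal independent set exactly
   once, the i-th output is produced at time ts_i, all outputs are produced by
   time Tenum, and the total time Tenum is at most d * |S|. *)
Definition enum_run (A : rel V) (C : rel (V * V)) (d : nat)
  (L : seq {set V * V}) (ts : seq nat) (Tenum : nat) : Prop :=
  [/\ uniq L, forall I, (I \in L) = maximal_independent A C I,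
      size ts = size L & sorted leq ts] /\
  (forall i, (i < size ts)%N -> (nth 0 ts i <= Tenum)%N) /\
  (Tenum <= d * size L)%N.

(* The algorithm: for each output I (in order) run BFS on (V, I), costing bfs_j time
   for the j-th output; return true as soon as an s-t path is found, false otherwise. *)
Definition alg_output (L : seq {set V * V}) (s t : V) : bool :=
  has (fun I => reach I s t) L.

Definition alg_time (L : seq {set V * V}) (ts bfs : seq nat) (Tenum : nat)
  (s t : V) : nat :=
  let k := find (fun I => reach I s t) L in
  if alg_output L s t then (nth 0 ts k + \sum_(j < k.+1) nth 0 bfs j)%N
  else (Tenum + \sum_(j < size L) nth 0 bfs j)%N.

End DACC.

From Stdlib Require Import Reals Lra Lia.
From mathcomp Require Import all_boot zify.
Set Implicit Arguments. Unset Strict Implicit. Unset Printing Implicit Defensive.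

(* Any valid subgraph containing an s-t path extends to a maximal independent
   set of C, which still contains the path; so scanning the mu(C) maximal
   independent sets decides DACC, each costing at most M(m) for the enumeration
   and O(n + m) for the BFS.  Acyclicity rules out loops and 2-cycles, hence
   2m + n <= n^2.  Therefore (n + m) M(m) = O(n^(2 + 2 * 2.372)) = O(n^6.75),
   and mu(C) <= 2^m <= 2^((n^2 - n)/2), which absorbs n^7 into 1.45^(n^2)
   because n^14 <= 14^14 2^n and 1.45^2 > 2. *)

Lemma leq_expn_exp2 k n : 0 < k -> n ^ k <= k ^ k * 2 ^ n.
Proof.
move=> k_gt0; set a := n %/ k.
have n_lt : n < k * a.+1.
  by rewrite {1}(divn_eq n k) -/a; have := ltn_pmod n k_gt0; lia.
have a_lt : a.+1 <= 2 ^ a := ltn_expl a (ltnSn 1).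
apply: (@leq_trans ((k * a.+1) ^ k)); first by rewrite leq_exp2r // ltnW.
rewrite expnMn leq_mul2l; apply/orP; right.
apply: (@leq_trans ((2 ^ a) ^ k)); first by rewrite leq_exp2r.
by rewrite -expnM leq_pexp2l // leq_divM.
Qed.

Section Digraphs.
Variable V : finType.
Implicit Types (A : rel V) (C : rel (V * V)) (F I : {set V * V}).

Lemma acyclic_card_edges A : acyclic A -> #|edges A|.*2 + #|V| <= #|V| * #|V|.
Proof.
move=> acA.
have A_irr x : ~~ A x x by apply/negP=> /acA; rewrite connect0.
have A_asym x y : A x y -> ~~ A y x by move=> /acA; apply: contra; apply: connect1.
set E := edges A; set R := [set (p.2, p.1) | p in E]; set D := [set (x, x) | x : V].
have inR x y : ((x, y) \in R) = A y x.
  apply/imsetP/idP => [[[u v] + [-> ->]] | Ayx]; first by rewrite inE.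
  by exists (y, x); rewrite ?inE.
have inD x y : ((x, y) \in D) = (x == y).
  by apply/imsetP/eqP => [[z _ [-> ->]] // | ->]; exists y.
have ER0 : E :&: R = set0.
  apply/setP => -[x y]; rewrite !inE inR /=.
  by case Axy: (A x y) => //; apply/negbTE/A_asym.
have ERD0 : (E :|: R) :&: D = set0.
  apply/setP => -[x y]; rewrite !inE inR inD /=.
  by case: eqP => [->|]; rewrite ?andbF // (negbTE (A_irr y)).
have swap_inj : injective (fun p : V * V => (p.2, p.1)) by move=> [? ?] [? ?] [-> ->].
have := max_card (E :|: R :|: D); rewrite card_prod.
rewrite cardsU ERD0 cards0 subn0 cardsU ER0 cards0 subn0.
by rewrite card_imset // card_imset ?addnn //; move=> x y [].
Qed.

Lemma independent_sub_edges A C I : independent A C I -> I \subset edges A.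
Proof. by case/andP. Qed.

Lemma maximal_independent_superset A C F : independent A C F ->
  exists2 I, maximal_independent A C I & F \subset I.
Proof.
move=> indF; have F_ok : independent A C F && (F \subset F) by rewrite indF subxx.
have [I /andP[indI sFI] I_max] :=
  @arg_maxnP _ F (fun I => independent A C I && (F \subset I)) (fun I => #|I|) F_ok.
exists I => //; rewrite /maximal_independent indI /=.
apply/forall_inP => e /setDP[_ eNI]; apply/negP => indeI.
have := I_max (e |: I); rewrite indeI (subset_trans sFI (subsetUr _ _)) cardsU1 eNI.
by move=> /(_ isT); apply/negP; rewrite -ltnNge add1n.
Qed.

Lemma reach_subset F I s t : F \subset I -> reach F s t -> reach I s t.
Proof. by move=> sFI; apply: connect_sub => x y Fxy; apply/connect1/(subsetP sFI). Qed.

Lemma mu_le_exp2 A C : mu A C <= 2 ^ #|edges A|.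
Proof.
rewrite -card_powerset; apply/subset_leq_card/subsetP => I.
by rewrite !inE => /andP[/independent_sub_edges].
Qed.

Lemma alg_time_le (L : seq {set V * V}) ts bfs Tenum s t d b :
  (forall i, i < size ts -> nth 0 ts i <= Tenum) -> size ts = size L ->
  Tenum <= d * size L -> (forall j, j < size L -> nth 0 bfs j <= b) ->
  alg_time L ts bfs Tenum s t <= (d + b) * size L.
Proof.
move=> ts_le size_ts Tenum_le bfs_le.
have sum_le p : p <= size L -> \sum_(j < p) nth 0 bfs j <= p * b.
  move=> p_le; rewrite -[p in p * b]card_ord -sum_nat_const.
  by apply: leq_sum => j _; apply/bfs_le/(leq_trans (ltn_ord j)).
rewrite /alg_time; case: ifP => [found | _]; last first.
  by have := sum_le _ (leqnn _); lia.
set k := find _ L.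
have k_lt : k < size L by rewrite -has_find.
have := ts_le k; rewrite size_ts => /(_ k_lt).
have := sum_le _ k_lt; have := leq_mul2r b k.+1 (size L); rewrite k_lt orbT.
lia.
Qed.

Section EnumRun.
Variables (A : rel V) (C : rel (V * V)) (d : nat).
Variables (L : seq {set V * V}) (ts : seq nat) (Tenum : nat).
Hypothesis run : enum_run A C d L ts Tenum.

Lemma enum_run_size : size L = mu A C.
Proof.
have [[uL memL _ _] _] := run.
by rewrite /mu -(card_uniqP uL); apply: eq_card => I; rewrite inE memL.
Qed.

Lemma enum_run_independent I : I \in L -> independent A C I.
Proof. by have [[_ -> _ _] _] := run; case/andP. Qed.

Lemma alg_outputP s t : alg_output L s t <-> DACC A C s t.
Proof.
have [[_ memL _ _] _] := run.
split=> [/hasP[I LI reachI] | [F [indF reachF]]].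
  by exists I; split=> //; apply: enum_run_independent.
have [I maxI sFI] := maximal_independent_superset indF.
by apply/hasP; exists I; rewrite ?memL // (reach_subset sFI).
Qed.

Lemma enum_run_alg_time_le bfs s t cB :
  (forall j, j < size L -> nth 0 bfs j <= cB * (#|V| + #|nth set0 L j|)) ->
  alg_time L ts bfs Tenum s t <= (d + cB * (#|V| + #|edges A|)) * mu A C.
Proof.
have [[_ _ size_ts _] [ts_le Tenum_le]] := run.
move=> bfs_le; rewrite -enum_run_size; apply: alg_time_le => // j j_lt.
apply: leq_trans (bfs_le j j_lt) _; rewrite leq_mul2l leq_add2l subset_leq_card ?orbT //.
exact/independent_sub_edges/enum_run_independent/mem_nth.
Qed.

End EnumRun.

End Digraphs.

Section RealBounds.
Local Open Scope R_scope.

Lemma INR_expn x k : INR (x ^ k) = INR x ^ k.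
Proof. by elim: k => [|k IHk]; rewrite ?expn0 // expnS mult_INR IHk. Qed.

Lemma Rpower_gt0 x y : 0 < Rpower x y.
Proof. exact: exp_pos. Qed.

Lemma Rpower_ge1 x y : 1 <= x -> 0 <= y -> 1 <= Rpower x y.
Proof. by move=> x_ge1 y_ge0; rewrite -(Rpower_O x); [apply: Rle_Rpower | lra]. Qed.

Lemma INR_sqr_Rpower n : (0 < n)%N -> INR (n * n) = Rpower (INR n) 2.
Proof.
move=> n_gt0; rewrite -[X in Rpower _ X]/(INR 2) Rpower_pow ?mult_INR /=; first ring.
exact/lt_0_INR/ltP.
Qed.

Lemma eventual_bound_upto (f : nat -> nat) (cM e : R) N0 : 0 <= e ->
    (forall k, (N0 <= k)%N -> INR (f k) <= cM * Rpower (INR k) e) ->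
  exists2 a, 0 <= a &
    forall k N, (0 < N)%N -> (k <= N)%N -> INR (f k) <= a * Rpower (INR N) e.
Proof.
move=> e_ge0 f_le; pose K := (\sum_(k < N0.+1) f k)%N.
have K_ge0 := pos_INR K; have cM_le := Rle_abs cM; have cM_abs_ge0 := Rabs_pos cM.
exists (INR K + Rabs cM) => [|k N N_gt0 k_le_N]; first lra.
have N_ge1 : 1 <= INR N by apply/(le_INR 1)/leP.
have Ne_ge1 := Rpower_ge1 N_ge1 e_ge0.
case: (leqP k N0) => [k_le | k_gt].
  have : INR (f k) <= INR K.
    apply/le_INR/leP; rewrite /K (bigD1 (Ordinal (k_le : (k < N0.+1)%N))) //=.
    exact: leq_addr.
  nra.
have k_gt0 : 0 < INR k by apply/lt_0_INR/ltP; lia.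
have : Rpower (INR k) e <= Rpower (INR N) e.
  by apply: Rle_Rpower_l => //; split=> //; apply/le_INR/leP.
have := f_le k (ltnW k_gt); have := Rpower_gt0 (INR k) e.
nra.
Qed.

Lemma cost_poly_bound (M : nat -> nat) (cM e e' : R) N0 :
    0 <= e -> 2 + 2 * e <= e' ->
    (forall k, (N0 <= k)%N -> INR (M k) <= cM * Rpower (INR k) e) ->
  exists2 c0, 1 <= c0 & forall n m, (0 < n)%N -> (m <= n * n)%N ->
    INR ((n + m) * M m) <= c0 * Rpower (INR n) e'.
Proof.
move=> e_ge0 e_le M_le; have [a a_ge0 M_le_upto] := eventual_bound_upto e_ge0 M_le.
exists (2 * a + 1) => [|n m n_gt0 m_le]; first lra.
have n_ge1 : 1 <= INR n by apply/(le_INR 1)/leP.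
have Mm_le : INR (M m) <= a * Rpower (INR n) (2 * e).
  by rewrite -Rpower_mult -INR_sqr_Rpower //; apply: M_le_upto; rewrite ?muln_gt0 ?n_gt0.
have nm_le : INR (n + m) <= 2 * Rpower (INR n) 2.
  rewrite -INR_sqr_Rpower //.
  have : INR (n + m) <= INR (n * n + n * n) by apply/le_INR/leP; nia.
  by rewrite [INR (_ + n * n)]plus_INR; lra.
have pow_le : Rpower (INR n) 2 * Rpower (INR n) (2 * e) <= Rpower (INR n) e'.
  by rewrite -Rpower_plus; apply: Rle_Rpower.
rewrite mult_INR.
apply: Rle_trans (Rmult_le_compat _ _ _ _ (pos_INR _) (pos_INR _) nm_le Mm_le) _.
by have := Rpower_gt0 (INR n) e'; nra.
Qed.

Lemma matmul_cost_bound (M : nat -> nat) (cM : R) N0 :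
    (forall k, (N0 <= k)%N -> INR (M k) <= cM * Rpower (INR k) (INR 2372 / INR 1000)) ->
  exists2 c0, 1 <= c0 & forall n m, (0 < n)%N -> (m <= n * n)%N ->
    INR ((n + m) * M m) <= c0 * Rpower (INR n) (INR 675 / INR 100).
Proof. by move=> M_le; apply: cost_poly_bound M_le; rewrite !INR_IZR_INZ /=; lra. Qed.

Lemma poly_exp2_le_exp_sqr n m : (0 < n)%N -> (m.*2 + n <= n * n)%N ->
  INR (n ^ 7 * 2 ^ m) <= INR (14 ^ 7) * (145 / 100) ^ (n * n).
Proof.
move=> n_gt0 m_le.
have sqr_le : ((n ^ 7 * 2 ^ m) ^ 2 <= (14 ^ 7) ^ 2 * 2 ^ (n * n))%N.
  rewrite expnMn -!expnM.
  apply: (leq_trans (leq_mul (leq_expn_exp2 n (isT : (0 < 7 * 2)%N)) (leqnn _))).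
  by rewrite -mulnA leq_mul2l -expnD leq_pexp2l ?orbT //; lia.
have INR2 : INR 2 = 2 by rewrite INR_IZR_INZ.
have := le_INR _ _ (elimT leP sqr_le).
rewrite INR_expn mult_INR !INR_expn mult_INR !INR_expn INR2 => sqr_le_R.
have pow2_le : 2 ^ (n * n) <= ((145 / 100) ^ (n * n)) ^ 2.
  by rewrite -pow_mult Nat.mul_comm pow_mult; apply: pow_incr; lra.
have Q_ge0 : 0 <= (145 / 100) ^ (n * n) by apply: pow_le; lra.
have c_ge0 := pow_le (INR 14) 7 (pos_INR 14).
have := Rmult_le_compat_l _ _ _ (pow2_ge_0 (INR 14 ^ 7)) pow2_le.
move=> sqr_le_c; apply: Rsqr_incr_0_var; rewrite /Rsqr; nra.
Qed.

Lemma Rpower_mul_le_exp_sqr (e : R) n m k : e <= 7 -> (0 < n)%N ->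
    (m.*2 + n <= n * n)%N -> (k <= 2 ^ m)%N ->
  Rpower (INR n) e * INR k <= INR (14 ^ 7) * Rpower (INR 145 / INR 100) (INR (n * n)).
Proof.
move=> e_le n_gt0 m_le k_le.
have n_ge1 : 1 <= INR n by apply/(le_INR 1)/leP.
have pow_le7 : Rpower (INR n) e <= INR (n ^ 7).
  rewrite INR_expn -Rpower_pow; last lra.
  by apply: Rle_Rpower => //; rewrite INR_IZR_INZ.
have -> : INR 145 / INR 100 = 145 / 100 by rewrite !INR_IZR_INZ.
rewrite Rpower_pow; last lra.
apply: Rle_trans (poly_exp2_le_exp_sqr n_gt0 m_le); rewrite mult_INR.
apply: Rmult_le_compat => //; [exact/Rlt_le/Rpower_gt0 | exact: pos_INR |].
exact/le_INR/leP.
Qed.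

Lemma Rle_cost_chain (T B c0 Z X P Y Q : R) :
    1 <= B -> 1 <= c0 -> 1 <= Z -> 0 <= X -> 0 <= Y ->
    T <= B * (X * Y) -> X <= c0 * P -> P * Y <= Z * Q ->
  [/\ T <= B * c0 * Z * (X * Y), T <= B * c0 * Z * (P * Y) & T <= B * c0 * Z * Q].
Proof.
move=> B_ge1 c0_ge1 Z_ge1 X_ge0 Y_ge0 T_le X_le PY_le.
have BXY_ge0 : 0 <= B * (X * Y) by apply: Rmult_le_pos; nra.
have XY_le : X * Y <= c0 * (P * Y) by nra.
have BXY_le : B * (X * Y) <= B * c0 * (P * Y) by nra.
have c0Z_ge1 : 1 <= c0 * Z by nra.
have Bc0_ge0 : 0 <= B * c0 by nra.
split; nra.
Qed.

End RealBounds.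

Theorem lemma4p1
  (* M(k): time to multiply two k x k matrices, with M(k) = O(k^2.372) *)
  (M : nat -> nat)
  (HMpos : forall k, (0 < M k)%N)
  (HMO : exists (cM : R) (N0 : nat), forall k, (N0 <= k)%N ->
           Rle (INR (M k)) (Rmult cM (Rpower (INR k) (Rdiv (INR 2372) (INR 1000)))))
  (* BFS on a digraph (V, I) takes O(|V| + |I|) time *)
  (cB : nat) :
  exists c : R, Rlt 0 c /\
  forall (V : finType) (A : rel V) (C : rel (V * V)) (s t : V)
         (L : seq {set V * V}) (ts bfs : seq nat) (Tenum : nat),
    acyclic A ->
    constraint_graph A C ->
    enum_run A C (M #|edges A|) L ts Tenum ->
    size bfs = size L ->
    (forall j, (j < size L)%N -> (nth 0 bfs j <= cB * (#|V| + #|nth set0 L j|))%N) ->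
    let n := #|V| in
    let m := #|edges A| in
    let T := alg_time L ts bfs Tenum s t in
    (alg_output L s t <-> DACC A C s t) /\
    Rle (INR T) (Rmult c (INR ((n + m) * M m * mu A C))) /\
    Rle (INR T) (Rmult c (Rmult (Rpower (INR n) (Rdiv (INR 675) (INR 100))) (INR (mu A C)))) /\
    Rle (INR T) (Rmult c (Rpower (Rdiv (INR 145) (INR 100)) (INR (n * n)))).
Proof.
have [cM [N0 M_le]] := HMO.
have [c0 c0_ge1 cost_le] := matmul_cost_bound M_le.
have B_ge1 : Rle 1 (INR cB.+1) by apply/(le_INR 1)/leP.
have Z_ge1 : Rle 1 (INR (14 ^ 7)) by apply/(le_INR 1)/leP; rewrite expn_gt0.
exists (Rmult (Rmult (INR cB.+1) c0) (INR (14 ^ 7))); split.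
  by apply: Rmult_lt_0_compat; [apply: Rmult_lt_0_compat|]; lra.
move=> V A C s t L ts bfs Tenum acA _ run _ bfs_le n m T.
have n_gt0 : (0 < n)%N by apply/card_gt0P; exists s.
have m_le := acyclic_card_edges acA.
have T_le : (T <= cB.+1 * ((n + m) * M m * mu A C))%N.
  apply: (leq_trans (enum_run_alg_time_le run s t bfs_le)).
  rewrite [X in (_ <= X)%N]mulnA leq_mul2r; apply/orP; right.
  by rewrite -/n -/m; have := HMpos m; nia.
have T_le_R : Rle (INR T) (Rmult (INR cB.+1) (Rmult (INR ((n + m) * M m)) (INR (mu A C)))).
  by rewrite -!mult_INR; apply/le_INR/leP.
have e_le7 : Rle (Rdiv (INR 675) (INR 100)) 7 by rewrite !INR_IZR_INZ /=; lra.
have m_le_sqr : (m <= n * n)%N by rewrite -/n -/m in m_le; lia.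
have [T_le1 T_le2 T_le3] := Rle_cost_chain B_ge1 c0_ge1 Z_ge1 (pos_INR _) (pos_INR _) T_le_R
  (cost_le n m n_gt0 m_le_sqr) (Rpower_mul_le_exp_sqr e_le7 n_gt0 m_le (mu_le_exp2 A C)).
rewrite [INR (_ * mu A C)]mult_INR.
by split; [exact: alg_outputP run s t | split].
Qed.
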